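(* Let $\delta:\mathcal{B}\to B$ be any derivation with Fourier components $\delta_n$. Then for every $b\in\mathcal{B}$ and every finitely supported $x\in c_{00}(\mathbb{Z})\subseteq\ell^2(\mathbb{Z})$, the series $\sum_{n\in\mathbb{Z}}\delta_n(b)x$ converges in $\ell^2(\mathbb{Z})$ and equals $\delta(b)x$.
   Context: Setup: $G$ is an infinite compact (Hausdorff) abelian group, written additively, and $x_1\in G$ generates a dense cyclic subgroup; $x_n=nx_1$. $\widehat G$ is the group of continuous characters. Let $H=\ell^2(\mathbb{Z})$ with canonical basis $\{E_l\}$; $VE_l=E_{l+1}$, $M_fE_l=f(x_l)E_l$, $\mathbb{L}E_l=lE_l$. $B=C^*(V,M_f:f\in C(G))$, $\mathcal{B}$ is the $*$-subalgebra generated by $V,V^{-1},M_\chi$ ($\chi\in\widehat G$). For $\theta\in\mathbb{R}$, $\rho_\theta(b)=e^{i\theta\mathbb{L}}be^{-i\theta\mathbb{L}}$. The $n$-th Fourier component of a derivation $\delta:\mathcal B\to B$ is $\delta_n(b)=\frac{1}{2\pi}\int_0^{2\pi}e^{in\theta}\rho_\theta^{-1}\big(\delta(\rho_\theta(b))\big)\,d\theta$. *)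

From HB Require Import structures.
From mathcomp Require Import all_boot all_order all_algebra.
From mathcomp Require Import all_classical all_reals all_analysis.
From mathcomp Require Import complex.
Set Implicit Arguments. Unset Strict Implicit. Unset Printing Implicit Defensive.
Import Order.TTheory GRing.Theory Num.Theory.
Import numFieldNormedType.Exports.
Local Open Scope classical_set_scope.
Local Open Scope ring_scope.

Section Defs.
Variable R : realType.

Definition Cx := R[i].
Definition sqmod (z : Cx) : R := complex.Re z ^+ 2 + complex.Im z ^+ 2.
Definition expi (t : R) : Cx := Complex (cos t) (sin t).

Definition Vec := int -> Cx.
Definition sqn (x : Vec) : \bar R := (\esum_(k in [set: int]) (sqmod (x k))%:E)%E.
Definition inl2 (x : Vec) : Prop := (sqn x < +oo)%E.

(* operators on l2(Z): only their restriction to l2 vectors matters *)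
Definition Op := Vec -> Vec.
Definition op_eq (S T : Op) : Prop := forall x, inl2 x -> S x = T x.
Definition opadd (S T : Op) : Op := fun x k => S x k + T x k.
Definition opscale (c : Cx) (S : Op) : Op := fun x k => c * S x k.
Definition opmul (S T : Op) : Op := fun x => S (T x).

Definition bounded_op (T : Op) : Prop :=
  [/\ forall x, inl2 x -> inl2 (T x),
      forall (c : Cx) x y, inl2 x -> inl2 y ->
        T (fun k => c * x k + y k) = (fun k => c * T x k + T y k)
    & exists M : R, forall x, inl2 x -> (sqn (T x) <= M%:E * sqn x)%E].

(* V E_l = E_{l+1}, its inverse, diagonal operators *)
Definition shiftV : Op := fun x l => x (l - 1).
Definition shiftVinv : Op := fun x l => x (l + 1).
Definition diagop (g : int -> Cx) : Op := fun x l => g l * x l.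
Definition Uth (t : R) : Op := diagop (fun l => expi (l%:~R * t)).
Definition rho (t : R) (T : Op) : Op := opmul (Uth t) (opmul T (Uth (- t))).
Definition rho_inv (t : R) (T : Op) : Op := opmul (Uth (- t)) (opmul T (Uth t)).

Inductive gen_alg (S : set Op) : Op -> Prop :=
| ga_base T : S T -> gen_alg S T
| ga_add A B : gen_alg S A -> gen_alg S B -> gen_alg S (opadd A B)
| ga_scale c A : gen_alg S A -> gen_alg S (opscale c A)
| ga_mul A B : gen_alg S A -> gen_alg S B -> gen_alg S (opmul A B)
| ga_ext A B : gen_alg S A -> op_eq A B -> gen_alg S B.

Definition cint (f : R -> Cx) : Cx :=
  Complex (Rintegral (@lebesgue_measure R) `[0, 2 * pi]%classic (fun t => complex.Re (f t)))
          (Rintegral (@lebesgue_measure R) `[0, 2 * pi]%classic (fun t => complex.Im (f t))).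

Variable G : topologicalZmodType.
Variable x1 : G.

Definition continuousC (f : G -> Cx) : Prop :=
  continuous (fun g => complex.Re (f g)) /\ continuous (fun g => complex.Im (f g)).
Definition character (chi : G -> Cx) : Prop :=
  [/\ continuousC chi, forall a b, chi (a + b) = chi a * chi b
    & forall a, sqmod (chi a) = 1].

Definition Mop (f : G -> Cx) : Op := diagop (fun l => f (x1 *~ l)).

Definition calB_gens : set Op :=
  [set T | T = shiftV \/ T = shiftVinv \/ exists chi, character chi /\ T = Mop chi].
Definition B_gens : set Op :=
  [set T | T = shiftV \/ T = shiftVinv \/ exists f, continuousC f /\ T = Mop f].
Definition in_calB : set Op := gen_alg calB_gens.
(* B = C*(V, M_f) = operator-norm closure of the *-algebra generated *)
Definition in_B (T : Op) : Prop :=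
  bounded_op T /\ forall eps : R, 0 < eps -> exists P, gen_alg B_gens P /\
    forall x, inl2 x -> (sqn (fun k => (T x k - P x k)%R) <= (eps ^+ 2)%:E * sqn x)%E.

Definition derivation (d : Op -> Op) : Prop :=
  [/\ forall a b, in_calB a -> op_eq a b -> op_eq (d a) (d b),
      forall a, in_calB a -> in_B (d a),
      forall a b, in_calB a -> in_calB b -> op_eq (d (opadd a b)) (opadd (d a) (d b)),
      forall c a, in_calB a -> op_eq (d (opscale c a)) (opscale c (d a))
    & forall a b, in_calB a -> in_calB b ->
        op_eq (d (opmul a b)) (opadd (opmul a (d b)) (opmul (d a) b))].

Definition fourier (d : Op -> Op) (n : int) (b : Op) : Op := fun x k =>
  Complex ((2 * pi)^-1) 0 * cint (fun t => expi (n%:~R * t) * rho_inv t (d (rho t b)) x k).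

End Defs.

From HB Require Import structures.
From mathcomp Require Import all_boot all_order all_algebra.
From mathcomp Require Import all_classical all_reals all_analysis.
From mathcomp Require Import complex.
From mathcomp Require Import ring lra zify.
Import Order.TTheory GRing.Theory Num.Theory.
Import numFieldNormedType.Exports.
Local Open Scope classical_set_scope.
Local Open Scope ring_scope.
Set Implicit Arguments. Unset Strict Implicit. Unset Printing Implicit Defensive.

(* Conjugation by e^{i theta L} scales the generators by characters of theta:
   rho_theta V = e^{i theta} V, rho_theta V^-1 = e^{-i theta} V^-1 and
   rho_theta M_chi = M_chi.  Hence for b in the *-algebra, rho_theta b is a
   trigonometric polynomial sum_p e^{i n_p theta} b_p with every b_p in the
   algebra, and by linearity of delta the k-th coordinate of
   rho_theta^-1 delta(rho_theta b) E_j is sum_p e^{i (n_p + j - k) theta} (delta(b_p) E_j)_k.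
   Integrating over theta, delta_n(b) E_j keeps exactly the terms with
   n = k - n_p - j.  So for finitely supported x, the partial sum over
   -M <= n <= N differs from delta(b) x by finitely many l^2 vectors
   x_j delta(b_p) E_j restricted to the coordinates outside a window that
   exhausts Z as M, N grow; their norms tend to 0. *)

Section ComplexArith.
Variable R : realType.
Local Notation Re := (@complex.Re R).
Local Notation Im := (@complex.Im R).

Lemma complexReD (x y : Cx R) : Re (x + y) = Re x + Re y.
Proof. by case: x => ? ?; case: y. Qed.

Lemma complexImD (x y : Cx R) : Im (x + y) = Im x + Im y.
Proof. by case: x => ? ?; case: y. Qed.

Lemma complexReM (x y : Cx R) : Re (x * y) = Re x * Re y - Im x * Im y.
Proof. by case: x => ? ?; case: y. Qed.

Lemma complexImM (x y : Cx R) : Im (x * y) = Re x * Im y + Im x * Re y.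
Proof. by case: x => ? ?; case: y. Qed.

Lemma sqmod_ge0 (z : Cx R) : 0 <= sqmod z.
Proof. by rewrite /sqmod addr_ge0 // sqr_ge0. Qed.

Lemma sqmod0 : sqmod (0 : Cx R) = 0.
Proof. by rewrite /sqmod /= expr0n /= addr0. Qed.

Lemma sqmodN (z : Cx R) : sqmod (- z) = sqmod z.
Proof. by case: z => a b; rewrite /sqmod /= !sqrrN. Qed.

Lemma sqmodM (a b : Cx R) : sqmod (a * b) = sqmod a * sqmod b.
Proof. by rewrite /sqmod complexReM complexImM; ring. Qed.

Lemma sqmodD_le (a b : Cx R) : sqmod (a + b) <= 2 * sqmod a + 2 * sqmod b.
Proof.
rewrite /sqmod complexReD complexImD.
have := sqr_ge0 (Re a - Re b); have := sqr_ge0 (Im a - Im b).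
by rewrite !expr2; nra.
Qed.

Lemma expi0 : expi (0 : R) = 1.
Proof. by rewrite /expi cos0 sin0. Qed.

Lemma expiD (a b : R) : expi (a + b) = expi a * expi b.
Proof.
rewrite /expi cosD sinD; apply/eqP.
by rewrite eq_complex /= !eqxx /= addrC eqxx.
Qed.

Lemma expiNK (a : R) : expi (- a) * expi a = 1.
Proof. by rewrite -expiD addNr expi0. Qed.

Lemma sqmod_expi (a : R) : sqmod (expi a) = 1.
Proof. by rewrite /sqmod /= cos2Dsin2. Qed.

End ComplexArith.

Section SquareSummable.
Variable R : realType.
Local Open Scope ereal_scope.

Lemma ge0_esumZl (T : choiceType) (S : set T) (c : R) (a : T -> \bar R) :
  (0 <= c)%R -> (forall i, 0 <= a i) ->
  \esum_(i in S) (c%:E * a i) = c%:E * \esum_(i in S) a i.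
Proof.
move=> c0 a0; rewrite /esum -ereal_supZl //; last first.
  by apply/set0P; exists 0; exists set0; [exact: fsets_set0|rewrite fsbig_set0].
congr ereal_sup; apply/seteqP; split => y /=.
  by move=> [A hA <-]; exists (\sum_(x \in A) a x); [exists A|rewrite ge0_mule_fsumr].
by move=> [z [A hA <-] <-]; exists A => //; rewrite ge0_mule_fsumr.
Qed.

Lemma sqn0 : sqn (fun _ : int => 0%R : Cx R) = 0.
Proof. by rewrite /sqn esum1 // => k _; rewrite sqmod0. Qed.

Lemma le_sqn (x y : Vec R) :
  (forall k, (sqmod (x k) <= sqmod (y k))%R) -> sqn x <= sqn y.
Proof. by move=> h; apply: le_esum => k _; rewrite lee_fin. Qed.

Lemma sqnZ (c : Cx R) (x : Vec R) : sqn (fun k => c * x k)%R = (sqmod c)%:E * sqn x.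
Proof.
rewrite /sqn -ge0_esumZl ?sqmod_ge0 //; last by move=> i; rewrite lee_fin sqmod_ge0.
by apply: eq_esum => k _; rewrite sqmodM.
Qed.

Lemma sqnD_le (x y : Vec R) :
  sqn (fun k => x k + y k)%R <= 2%:E * sqn x + 2%:E * sqn y.
Proof.
rewrite /sqn -!ge0_esumZl //; try by move=> i; rewrite lee_fin sqmod_ge0.
rewrite -esumD; try by move=> i _; rewrite mule_ge0 // lee_fin sqmod_ge0.
by apply: le_esum => k _; rewrite -!EFinM -EFinD lee_fin sqmodD_le.
Qed.

Lemma sqn_shift (x : Vec R) (a : int) : sqn (fun k => x (k + a)%R) = sqn x.
Proof.
rewrite /sqn [RHS](@reindex_esum _ _ _ setT setT (fun k => k + a)%R) //.
by rewrite setTT_bijective; exists (fun k => k - a)%R => k; rewrite ?addrK ?subrK.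
Qed.

Lemma inl2D (x y : Vec R) : inl2 x -> inl2 y -> inl2 (fun k => x k + y k)%R.
Proof.
move=> hx hy; apply: le_lt_trans (sqnD_le x y) _.
by rewrite lte_add_pinfty // lte_mul_pinfty.
Qed.

Lemma inl2Z (c : Cx R) (x : Vec R) : inl2 x -> inl2 (fun k => c * x k)%R.
Proof. by rewrite /inl2 sqnZ => h; rewrite lte_mul_pinfty // lee_fin sqmod_ge0. Qed.

Lemma inl2_le (x y : Vec R) :
  (forall k, (sqmod (x k) <= sqmod (y k))%R) -> inl2 y -> inl2 x.
Proof. by move=> h hy; apply: le_lt_trans (le_sqn h) hy. Qed.

Lemma inl2_finsupp (x : Vec R) (s : seq int) :
  (forall k, k \notin s -> x k = 0%R) -> inl2 x.
Proof.
move=> h; rewrite /inl2 /sqn.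
rewrite (_ : \esum_(k in [set: int]) _ = \esum_(k in [set` s]) (sqmod (x k))%:E).
  rewrite esum_fset; [|exact: finite_seq|by move=> i _; rewrite lee_fin sqmod_ge0].
  by rewrite fsumEFin ?ltry //; exact: finite_seq.
rewrite [RHS]esum_mkcond; apply: eq_esum => k _.
case: ifP => // /negbT hk; rewrite h ?sqmod0 //.
by apply: contra hk => ks; rewrite mem_setE.
Qed.

Lemma inl2_0 : inl2 (fun _ : int => 0%R : Cx R).
Proof. exact: (@inl2_finsupp _ [::]). Qed.

Lemma inl2_sum (I : Type) (r : seq I) (c : I -> Cx R) (y : I -> Vec R) :
  (forall i, inl2 (y i)) -> inl2 (fun k => \sum_(i <- r) c i * y i k)%R.
Proof.
move=> hy; elim: r => [|i r IH].
  by under eq_fun do rewrite big_nil; exact: inl2_0.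
under eq_fun do rewrite big_cons.
by apply: inl2D => //; apply: inl2Z.
Qed.

Lemma inl2N (x : Vec R) : inl2 x -> inl2 (fun k => - x k)%R.
Proof. by apply: inl2_le => k; rewrite sqmodN. Qed.

Lemma finsupp_seq (x : Vec R) (N : nat) : (forall k, (N%:Z < `|k|)%R -> x k = 0%R) ->
  exists js : seq int, uniq js /\ forall k, k \notin js -> x k = 0%R.
Proof.
move=> hN; exists [seq (i%:Z - N%:Z)%R | i <- iota 0 (N + N).+1]; split.
  by rewrite map_inj_uniq ?iota_uniq // => i j /addIr [].
move=> k hk; apply: hN; rewrite ltNge; apply: contra hk => hkN.
apply/mapP; exists (absz (k + N%:Z)%R); last by rewrite gez0_abs ?addrK //; lia.
by rewrite mem_iota; lia.
Qed.

Lemma esum_tail_small (T : choiceType) (u : T -> R) : (forall k, 0 <= u k)%R ->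
  \esum_(k in [set: T]) (u k)%:E < +oo -> forall e : R, (0 < e)%R ->
  exists s : seq T, forall w : T -> R, (forall k, 0 <= w k <= u k)%R ->
    (forall k, k \in s -> w k = 0%R) -> \esum_(k in [set: T]) (w k)%:E <= e%:E.
Proof.
move=> u0 ufin e e0.
set S := \esum_(k in [set: T]) (u k)%:E in ufin *.
have Sfin : S \is a fin_num by rewrite ge0_fin_numE // esum_ge0 // => k _; rewrite lee_fin.
have : S - e%:E < S by rewrite lteBlDr // lteDl // lte_fin.
rewrite {2}/S /esum => /ereal_sup_gt [_ [A [finA _] <-]] hA.
case/finite_seqP: (finA) => s Aeq; exists s => w w0 ws.
apply: ge_ereal_sup => _ [X [finX _] <-].
rewrite (fsbigID A) // fsbig1; last by move=> k [_]; rewrite Aeq => /ws ->.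
have finXA : finite_set (X `&` ~` A) by apply: finite_setIl.
change (0 + \sum_(i \in X `&` ~` A) (w i)%:E <= e%:E); rewrite add0e.
apply: (@le_trans _ _ (\sum_(i \in X `&` ~` A) (u i)%:E)).
  by apply: lee_fsum => // i _; rewrite lee_fin; case/andP: (w0 i).
have hXA : \sum_(i \in (X `&` ~` A) `|` A) (u i)%:E <= S.
  apply: esum_ge; exists ((X `&` ~` A) `|` A) => //.
  by split => //; rewrite finite_setU.
rewrite fsbigU0 // in hXA; last by move=> i [[_ nA] Ai].
rewrite -(@leeD2rE _ (\sum_(i \in A) (u i)%:E)); last by rewrite fsumEFin.
apply: le_trans hXA _; rewrite lteBlDr // in hA.
by rewrite addeC; exact: ltW.
Qed.

End SquareSummable.

Section OffWindow.
Variable R : realType.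
Local Open Scope ereal_scope.

Lemma sqn_off_window_small (x : Vec R) (q : int) : inl2 x ->
  forall e : R, (0 < e)%R -> exists K : nat, forall M N : nat, (K <= M)%N -> (K <= N)%N ->
    sqn (fun k => if (- M%:Z <= k - q <= N%:Z)%R then 0%R else x k) <= e%:E.
Proof.
move=> hx e e0; have [s hs] := esum_tail_small (fun k => sqmod_ge0 (x k)) hx e0.
exists (\sum_(k <- s) `|k - q|%N)%N => M N hM hN; apply: hs => k.
  by case: ifP => _; rewrite ?sqmod0 sqmod_ge0 ?lexx ?sqmod_ge0.
move=> ks; have : (`|k - q| <= \sum_(j <- s) `|j - q|)%N.
  by rewrite (big_rem k ks) /= leq_addr.
by move=> hk; rewrite ifT ?sqmod0 //; lia.
Qed.

Lemma sqn_off_window_sum_small (I : Type) (r : seq I) (q : I -> int) (C : I -> Vec R) :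
  (forall i, inl2 (C i)) ->
  forall e : R, (0 < e)%R -> exists K : nat, forall M N : nat, (K <= M)%N -> (K <= N)%N ->
    sqn (fun k => (\sum_(i <- r) if - M%:Z <= k - q i <= N%:Z then 0 else C i k)%R)
      <= e%:E.
Proof.
move=> hC; elim: r => [|i r IH] e e0.
  exists 0%N => M N _ _; under eq_fun do rewrite big_nil.
  by rewrite sqn0 lee_fin ltW.
have e4 : (0 < e / 4)%R by rewrite divr_gt0.
have [K1 hK1] := IH _ e4; have [K2 hK2] := sqn_off_window_small (q i) (hC i) e4.
exists (maxn K1 K2) => M N; rewrite !geq_max => /andP [hM1 hM2] /andP [hN1 hN2].
under eq_fun do rewrite big_cons.
apply: le_trans (sqnD_le _ _) _.
have two0 : 0 <= 2%:E :> \bar R by rewrite lee_fin.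
apply: le_trans (leeD (lee_wpmul2l two0 (hK2 M N hM2 hN2)) (lee_wpmul2l two0 (hK1 M N hM1 hN1))) _.
by rewrite -!EFinM -EFinD lee_fin; lra.
Qed.

End OffWindow.

Section CircleIntegral.
Variable R : realType.
Local Notation Re := (@complex.Re R).
Local Notation Im := (@complex.Im R).
Local Notation mu := (@lebesgue_measure R).
Local Notation contC := (@continuousC R R).

Lemma Rintegral_0_2pi_FTC (F f : R -> R) : continuous f ->
  (forall x, derivable F x 1) -> (forall x, F^`()%classic x = f x) -> continuous F ->
  Rintegral mu `[0, 2 * pi]%classic f = F (2 * pi) - F 0.
Proof.
move=> cf dF F'f cF; have pi0 : (0 < 2 * pi :> R) by rewrite mulr_gt0 // pi_gt0.
rewrite /Rintegral (@continuous_FTC2 _ f F) //; first exact: continuous_subspaceT.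
split; first by move=> x _; exact: dF.
  by apply: cvg_at_right_filter; exact: cF.
by apply: cvg_at_left_filter; exact: cF.
Qed.

Lemma sincos_int_2pi (m : int) :
  sin (m%:~R * (2 * pi)) = 0 :> R /\ cos (m%:~R * (2 * pi)) = 1 :> R.
Proof.
have nat2pi (n : nat) : sin (n%:R * (2 * pi)) = 0 :> R /\ cos (n%:R * (2 * pi)) = 1 :> R.
  elim: n => [|n [IHs IHc]]; first by rewrite mul0r sin0 cos0.
  by rewrite -addn1 natrD mulrDl mul1r [X in _ + X]mulr_natl sinD2pi cosD2pi.
case: m => n; first by rewrite -pmulrn; exact: nat2pi.
rewrite NegzE mulrNz mulNr sinN cosN -pmulrn.
by have [-> ->] := nat2pi n.+1; rewrite oppr0.
Qed.

Lemma continuous_comp_mulr (g : R -> R) (a : R) :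
  continuous g -> continuous (fun t => g (a * t)).
Proof. by move=> cg x; apply: continuous_comp; [exact: mulrl_continuous|exact: cg]. Qed.

Lemma derive1_comp_mulr (g : R -> R) (a x : R) : derivable g (a * x) 1 ->
  derivable (fun t => g (a * t)) x 1 /\
  (fun t => g (a * t))^`()%classic x = g^`()%classic (a * x) * a.
Proof.
move=> dg; have dl : derivable (fun t : R => a * t) x 1 by exact: derivableM.
split; first by apply/derivable1_diffP; apply: differentiable_comp;
  [exact/derivable1_diffP|exact/derivable1_diffP].
by have := derive1_comp dl dg; rewrite /comp => ->; rewrite derive1Ml // derive1_id mulr1.
Qed.

Lemma Rintegral_cos_int (m : int) : m != 0 ->
  Rintegral mu `[0, 2 * pi]%classic (fun t => cos (m%:~R * t)) = 0.
Proof.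
move=> m0; have mR : (m%:~R : R) != 0 by rewrite intr_eq0.
have dsin x := derive1_comp_mulr (@derivable_sin _ (m%:~R * x)).
rewrite (@Rintegral_0_2pi_FTC (fun t => (m%:~R)^-1 * sin (m%:~R * t))).
- by rewrite mulr0 sin0 mulr0 (sincos_int_2pi m).1 mulr0 subr0.
- exact/continuous_comp_mulr/continuous_cos.
- by move=> x; apply: derivableM => //; exact: (dsin x).1.
- move=> x; rewrite derive1Ml ?(dsin x).1 // (dsin x).2 derive1E derive_val.
  by rewrite mulrCA mulVf // mulr1.
- by move=> x; apply: cvgM; [exact: cvg_cst|exact/continuous_comp_mulr/continuous_sin].
Qed.

Lemma Rintegral_sin_int (m : int) : m != 0 ->
  Rintegral mu `[0, 2 * pi]%classic (fun t => sin (m%:~R * t)) = 0.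
Proof.
move=> m0; have mR : (m%:~R : R) != 0 by rewrite intr_eq0.
have dcos x := derive1_comp_mulr (@derivable_cos _ (m%:~R * x)).
rewrite (@Rintegral_0_2pi_FTC (fun t => - (m%:~R)^-1 * cos (m%:~R * t))).
- by rewrite mulr0 cos0 (sincos_int_2pi m).2 subrr.
- exact/continuous_comp_mulr/continuous_sin.
- by move=> x; apply: derivableM => //; exact: (dcos x).1.
- move=> x; rewrite derive1Ml ?(dcos x).1 // (dcos x).2 derive1E derive_val.
  by rewrite !mulNr mulrN opprK mulrCA mulVf // mulr1.
- by move=> x; apply: cvgM; [exact: cvg_cst|exact/continuous_comp_mulr/continuous_cos].
Qed.

Lemma continuousC_cst (c : Cx R) : contC (fun _ => c).
Proof. by split => x; exact: cvg_cst. Qed.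

Lemma continuousCD (f g : R -> Cx R) : contC f -> contC g -> contC (fun t => f t + g t).
Proof.
move=> [f1 f2] [g1 g2]; split.
  by under eq_fun do rewrite complexReD; move=> x; apply: cvgD; [exact: f1|exact: g1].
by under eq_fun do rewrite complexImD; move=> x; apply: cvgD; [exact: f2|exact: g2].
Qed.

Lemma continuousCZ (c : Cx R) (f : R -> Cx R) : contC f -> contC (fun t => c * f t).
Proof.
move=> [f1 f2]; split => /=.
  under eq_fun do rewrite complexReM.
  by move=> x; apply: cvgB; apply: cvgM; [exact: cvg_cst|exact: f1|exact: cvg_cst|exact: f2].
under eq_fun do rewrite complexImM.
by move=> x; apply: cvgD; apply: cvgM; [exact: cvg_cst|exact: f2|exact: cvg_cst|exact: f1].
Qed.

Lemma continuousC_sum (I : Type) (r : seq I) (f : I -> R -> Cx R) :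
  (forall i, contC (f i)) -> contC (fun t => \sum_(i <- r) f i t).
Proof.
move=> cf; elim: r => [|i r IH].
  by under eq_fun do rewrite big_nil; exact: continuousC_cst.
by under eq_fun do rewrite big_cons; exact: continuousCD.
Qed.

Lemma continuousC_expi (a : R) : contC (fun t => expi (a * t)).
Proof. by split; apply: continuous_comp_mulr; [exact: continuous_cos|exact: continuous_sin]. Qed.

Lemma integrable_0_2pi (g : R -> R) : continuous g ->
  mu.-integrable `[0, 2 * pi]%classic (EFin \o g).
Proof.
move=> cg; apply: continuous_compact_integrable; first exact: segment_compact.
exact: continuous_subspaceT.
Qed.

Lemma cint0 : cint (fun _ : R => 0 : Cx R) = 0.
Proof. by rewrite /cint /= Rintegral_cst //= mul0r; apply/eqP; rewrite eq_complex /= eqxx. Qed.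

Lemma cintD (f g : R -> Cx R) : contC f -> contC g ->
  cint (fun t => f t + g t) = cint f + cint g.
Proof.
move=> [f1 f2] [g1 g2]; rewrite /cint /=.
under eq_Rintegral do rewrite complexReD.
under [X in Complex _ X]eq_Rintegral do rewrite complexImD.
by rewrite !RintegralD //; apply: integrable_0_2pi.
Qed.

Lemma cintZ (c : Cx R) (f : R -> Cx R) : contC f -> cint (fun t => c * f t) = c * cint f.
Proof.
move=> [f1 f2]; rewrite /cint /=.
under eq_Rintegral do rewrite complexReM.
under [X in Complex _ X]eq_Rintegral do rewrite complexImM.
have intZ (a : R) (g : R -> R) : continuous g ->
    mu.-integrable `[0, 2 * pi]%classic (EFin \o (fun t => a * g t)).
  by move=> cg; apply: integrable_0_2pi => x; apply: cvgM; [exact: cvg_cst|exact: cg].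
rewrite RintegralB ?RintegralD ?intZ // !RintegralZl ?integrable_0_2pi //.
by case: c.
Qed.

Lemma cint_sum (I : Type) (r : seq I) (f : I -> R -> Cx R) :
  (forall i, contC (f i)) -> cint (fun t => \sum_(i <- r) f i t) = \sum_(i <- r) cint (f i).
Proof.
move=> cf; elim: r => [|i r IH].
  by under eq_fun do rewrite big_nil; rewrite big_nil cint0.
under eq_fun do rewrite big_cons.
by rewrite cintD ?IH ?big_cons //; exact: continuousC_sum.
Qed.

Lemma cint_expi (m : int) :
  cint (fun t => expi (m%:~R * t)) = if m == 0 then (Complex (2 * pi) 0 : Cx R) else 0.
Proof.
have [->|m0] := eqVneq m 0; last by rewrite /cint /= Rintegral_cos_int // Rintegral_sin_int.
rewrite /cint /=; under eq_Rintegral do rewrite mul0r cos0.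
under [X in Complex _ X]eq_Rintegral do rewrite mul0r sin0.
rewrite !Rintegral_cst //= mul0r mul1r lebesgue_measure_itv /=.
by rewrite lte_fin mulr_gt0 ?pi_gt0 //= subr0.
Qed.

Lemma scaled_cint_expi (a : Cx R) (m : int) :
  Complex (2 * pi)^-1 0 * cint (fun t => a * expi (m%:~R * t)) = if m == 0 then a else 0.
Proof.
rewrite cintZ; last exact: continuousC_expi.
rewrite cint_expi mulrCA; case: eqP => _; last by rewrite !mulr0.
have pi0 : 2 * pi != 0 :> R by rewrite mulf_neq0 // gt_eqF // pi_gt0.
suff -> : Complex (2 * pi)^-1 0 * Complex (2 * pi) 0 = 1 :> Cx R by rewrite mulr1.
by apply/eqP; rewrite eq_complex /= !mulr0 !mul0r subr0 addr0 mulVf // !eqxx.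
Qed.

End CircleIntegral.

Section L2Linear.
Variable R : realType.

Definition l2_linear (T : Op R) :=
  (forall x, inl2 x -> inl2 (T x)) /\
  forall (c : Cx R) x y, inl2 x -> inl2 y ->
    T (fun k => c * x k + y k) = fun k => c * T x k + T y k.

Lemma l2_linear0 T : l2_linear T -> T (fun _ => 0) = fun _ => 0.
Proof.
move=> [_ hT]; have := hT 1 _ _ (inl2_0 R) (inl2_0 R).
have -> : (fun k : int => 1 * 0 + 0) = (fun _ => 0) :> Vec R.
  by apply/funext => k; rewrite mulr0 addr0.
move=> h; apply/funext => k; move: (congr1 (fun y => y k - T (fun _ => 0) k) h) => /=.
by rewrite mul1r subrr addrK => <-.
Qed.

Lemma l2_linear_sum T (I : Type) (r : seq I) (c : I -> Cx R) (y : I -> Vec R) :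
  l2_linear T -> (forall i, inl2 (y i)) ->
  T (fun k => \sum_(i <- r) c i * y i k) = fun k => \sum_(i <- r) c i * T (y i) k.
Proof.
move=> hT hy; elim: r => [|i r IH].
  under eq_fun do rewrite big_nil.
  by rewrite l2_linear0 //; apply/funext => k; rewrite big_nil.
under eq_fun do rewrite big_cons.
rewrite hT.2 ?IH //; last exact: inl2_sum.
by under [RHS]eq_fun do rewrite big_cons.
Qed.

Lemma l2_linear_diag (g : int -> Cx R) : (forall l, sqmod (g l) = 1) -> l2_linear (diagop g).
Proof.
move=> hg; split => [x|c x y _ _]; last by apply/funext => k; rewrite /diagop; ring.
by apply: inl2_le => k; rewrite /diagop sqmodM hg mul1r.
Qed.

Lemma l2_linear_Uth t : l2_linear (Uth t).
Proof. by apply: l2_linear_diag => l; rewrite sqmod_expi. Qed.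

Lemma l2_linear_shiftV : l2_linear (@shiftV R).
Proof. by split => // x; rewrite /inl2 (sqn_shift x (-1)). Qed.

Lemma l2_linear_shiftVinv : l2_linear (@shiftVinv R).
Proof. by split => // x; rewrite /inl2 (sqn_shift x 1). Qed.

Lemma l2_linear_add A B : l2_linear A -> l2_linear B -> l2_linear (opadd A B).
Proof.
move=> hA hB; split => [x hx|c x y hx hy]; first by apply: inl2D; [apply: hA.1|apply: hB.1].
by rewrite /opadd hA.2 // hB.2 //; apply/funext => k /=; ring.
Qed.

Lemma l2_linear_scale c A : l2_linear A -> l2_linear (opscale c A).
Proof.
move=> hA; split => [x hx|c' x y hx hy]; first by apply: inl2Z; apply: hA.1.
by rewrite /opscale hA.2 //; apply/funext => k /=; ring.
Qed.

Lemma l2_linear_mul A B : l2_linear A -> l2_linear B -> l2_linear (opmul A B).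
Proof.
move=> hA hB; split => [x hx|c x y hx hy]; first by apply: hA.1; apply: hB.1.
by rewrite /opmul hB.2 // hA.2 //; apply: hB.1.
Qed.

Lemma l2_linear_ext A B : l2_linear A -> op_eq A B -> l2_linear B.
Proof.
move=> hA eAB; split => [x hx|c x y hx hy]; first by rewrite -eAB //; apply: hA.1.
by rewrite -eAB ?hA.2 -?eAB //; apply: inl2D => //; apply: inl2Z.
Qed.

End L2Linear.

Section Conjugation.
Variable R : realType.

Lemma UthK t (x : Vec R) : Uth (- t) (Uth t x) = x.
Proof. by apply/funext => l; rewrite /Uth /diagop mulrA mulrN expiNK mul1r. Qed.

Lemma Uth0 (x : Vec R) : Uth 0 x = x.
Proof. by apply/funext => l; rewrite /Uth /diagop mulr0 expi0 mul1r. Qed.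

Lemma rho0 (A : Op R) : rho 0 A = A.
Proof. by apply/funext => x; rewrite /rho /opmul oppr0 !Uth0. Qed.

Lemma rho_inv0 (A : Op R) : rho_inv 0 A = A.
Proof. by apply/funext => x; rewrite /rho_inv /opmul oppr0 !Uth0. Qed.

Lemma rhoD t (A B : Op R) : rho t (opadd A B) = opadd (rho t A) (rho t B).
Proof. by apply/funext => x; apply/funext => l; rewrite /rho /opmul /opadd /Uth /diagop mulrDr. Qed.

Lemma rhoZ t c (A : Op R) : rho t (opscale c A) = opscale c (rho t A).
Proof.
by apply/funext => x; apply/funext => l; rewrite /rho /opmul /opscale /Uth /diagop mulrCA.
Qed.

Lemma rhoM t (A B : Op R) : rho t (opmul A B) = opmul (rho t A) (rho t B).
Proof. by apply/funext => x; rewrite /rho /opmul UthK. Qed.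

Lemma rho_ext t (A B : Op R) : op_eq A B -> op_eq (rho t A) (rho t B).
Proof. by move=> e x hx; rewrite /rho /opmul e //; apply: (l2_linear_Uth (- t)).1. Qed.

Lemma rho_diagop t (g : int -> Cx R) : rho t (diagop g) = diagop g.
Proof.
apply/funext => x; apply/funext => l; rewrite /rho /opmul /Uth /diagop mulrN.
by rewrite -[RHS]mul1r -(expiNK (l%:~R * t)); ring.
Qed.

Lemma rho_shiftV t : rho t (@shiftV R) = opscale (expi (1%:~R * t)) (@shiftV R).
Proof.
apply/funext => x; apply/funext => l; rewrite /rho /opmul /opscale /Uth /diagop /shiftV.
by rewrite mulrA -expiD; congr (expi _ * _); rewrite intrB; ring.
Qed.

Lemma rho_shiftVinv t : rho t (@shiftVinv R) = opscale (expi ((-1)%:~R * t)) (@shiftVinv R).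
Proof.
apply/funext => x; apply/funext => l; rewrite /rho /opmul /opscale /Uth /diagop /shiftVinv.
by rewrite mulrA -expiD; congr (expi _ * _); rewrite intrD; ring.
Qed.

End Conjugation.

Section TrigonometricDecomposition.
Variable R : realType.
Variable G : topologicalZmodType.
Variable x1 : G.

Lemma calB_l2_linear (T : Op R) : in_calB x1 T -> l2_linear T.
Proof.
elim => {T} [T hT|A B _ hA _ hB|c A _ hA|A B _ hA _ hB|A B _ hA eAB].
- case: hT => [->|[->|[chi [[_ _ hchi] ->]]]]; first exact: l2_linear_shiftV.
    exact: l2_linear_shiftVinv.
  exact: l2_linear_diag.
- exact: l2_linear_add.
- exact: l2_linear_scale.
- exact: l2_linear_mul.
- exact: l2_linear_ext eAB.
Qed.

Lemma calB_zero : in_calB x1 (fun (x : Vec R) (k : int) => 0).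
Proof.
apply: (@ga_ext _ _ (opscale 0 (@shiftV R))); first by apply/ga_scale/ga_base; left.
by move=> x _; apply/funext => k; rewrite /opscale mul0r.
Qed.

Definition trig_op (I : Type) (r : seq I) (n : I -> int) (c : I -> Op R) (t : R) : Op R :=
  fun x k => \sum_(i <- r) expi ((n i)%:~R * t) * c i x k.

Lemma trig_op_nil (I : Type) (n : I -> int) (c : I -> Op R) (t : R) :
  trig_op [::] n c t = fun _ _ => 0.
Proof. by apply/funext => x; apply/funext => k; rewrite /trig_op big_nil. Qed.

Lemma trig_op_cons (I : Type) (i : I) r n (c : I -> Op R) (t : R) :
  trig_op (i :: r) n c t = opadd (opscale (expi ((n i)%:~R * t)) (c i)) (trig_op r n c t).
Proof. by apply/funext => x; apply/funext => k; rewrite /trig_op big_cons. Qed.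

Lemma calB_trig_op (I : Type) (r : seq I) n c t :
  (forall i, in_calB x1 (c i)) -> in_calB x1 (@trig_op I r n c t).
Proof.
move=> hc; elim: r => [|i r IH]; first by rewrite trig_op_nil; exact: calB_zero.
by rewrite trig_op_cons; apply: ga_add; [exact: (ga_scale _ (hc i))|exact: IH].
Qed.

Definition rho_trigonometric (b : Op R) :=
  exists (I : Type) (r : seq I) (n : I -> int) (c : I -> Op R),
    (forall i, in_calB x1 (c i)) /\ forall t, op_eq (rho t b) (trig_op r n c t).

Lemma rho_trigonometric_eigen (b : Op R) (m : int) : in_calB x1 b ->
  (forall t, rho t b = opscale (expi (m%:~R * t)) b) -> rho_trigonometric b.
Proof.
move=> hb hrho; exists unit, [:: tt], (fun=> m), (fun=> b); split => // t x _.
by rewrite hrho; apply/funext => k; rewrite /trig_op big_seq1.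
Qed.

Lemma rho_trigonometricD A B :
  rho_trigonometric A -> rho_trigonometric B -> rho_trigonometric (opadd A B).
Proof.
move=> [I1 [r1 [n1 [c1 [hc1 e1]]]]] [I2 [r2 [n2 [c2 [hc2 e2]]]]].
exists (I1 + I2)%type, (map inl r1 ++ map inr r2).
exists (fun i => match i with inl i1 => n1 i1 | inr i2 => n2 i2 end).
exists (fun i => match i with inl i1 => c1 i1 | inr i2 => c2 i2 end).
split => [[i|i]|t x hx]; [exact: hc1|exact: hc2|].
by rewrite rhoD /opadd e1 // e2 //; apply/funext => k; rewrite /trig_op big_cat !big_map.
Qed.

Lemma rho_trigonometricZ c A : rho_trigonometric A -> rho_trigonometric (opscale c A).
Proof.
move=> [I [r [n [cA [hc e]]]]]; exists I, r, n, (fun i => opscale c (cA i)).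
split => [i|t x hx]; first exact: (ga_scale _ (hc i)).
rewrite rhoZ /opscale e //; apply/funext => k.
by rewrite /trig_op mulr_sumr; apply: eq_bigr => i _; rewrite mulrCA.
Qed.

Lemma rho_trigonometricM A B :
  rho_trigonometric A -> rho_trigonometric B -> rho_trigonometric (opmul A B).
Proof.
move=> [I1 [r1 [n1 [c1 [hc1 e1]]]]] [I2 [r2 [n2 [c2 [hc2 e2]]]]].
exists (I1 * I2)%type, [seq (i, j) | i <- r1, j <- r2].
exists (fun p => n1 p.1 + n2 p.2), (fun p => opmul (c1 p.1) (c2 p.2)).
split => [p|t x hx]; first exact: (ga_mul (hc1 p.1) (hc2 p.2)).
have hB : inl2 (trig_op r2 n2 c2 t x).
  by apply: inl2_sum => j; apply: (calB_l2_linear (hc2 j)).1.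
rewrite rhoM /opmul e2 // e1 //; apply/funext => k.
rewrite /trig_op big_allpairs; apply: eq_bigr => i _.
rewrite (l2_linear_sum _ _ (calB_l2_linear (hc1 i))); last first.
  by move=> j; apply: (calB_l2_linear (hc2 j)).1.
by rewrite mulr_sumr; apply: eq_bigr => j _; rewrite /opmul mulrA -expiD intrD mulrDl.
Qed.

Lemma rho_trigonometric_ext A B : rho_trigonometric A -> op_eq A B -> rho_trigonometric B.
Proof.
move=> [I [r [n [c [hc e]]]]] eAB; exists I, r, n, c; split => // t x hx.
by rewrite -(rho_ext t eAB) // e.
Qed.

Lemma calB_rho_trigonometric b : in_calB x1 b -> rho_trigonometric b.
Proof.
move=> hb; elim: hb => {b} [T hT|A B _ hA _ hB|c A _ hA|A B _ hA _ hB|A B _ hA eAB].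
- have hT' : in_calB x1 T by exact: ga_base.
  case: hT => [eT|[eT|[chi [_ eT]]]]; subst T.
  + by apply: (rho_trigonometric_eigen (m := 1)) => // t; rewrite rho_shiftV.
  + by apply: (rho_trigonometric_eigen (m := -1)) => // t; rewrite rho_shiftVinv.
  + apply: (rho_trigonometric_eigen (m := 0)) => // t; rewrite rho_diagop.
    by apply/funext => x; apply/funext => k; rewrite /opscale mul0r expi0 mul1r.
- exact: rho_trigonometricD.
- exact: rho_trigonometricZ.
- exact: rho_trigonometricM.
- exact: rho_trigonometric_ext eAB.
Qed.

End TrigonometricDecomposition.

Section WindowCount.
Variable V : zmodType.

Lemma sum_indicator_nonneg (N : nat) (w : int) (v : V) :
  \sum_(0 <= m < N.+1) (if m%:Z == w then v else 0) = if 0 <= w <= N%:Z then v else 0.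
Proof.
elim: N => [|N IH]; first by rewrite big_nat1; do 2 case: ifP => /= ?; try lia.
rewrite big_nat_recr //= IH.
by do 3 case: ifP => /= ?; rewrite ?addr0 ?add0r //; try lia.
Qed.

Lemma sum_indicator_neg (M : nat) (w : int) (v : V) :
  \sum_(1 <= m < M.+1) (if - m%:Z == w then v else 0) = if - M%:Z <= w <= -1 then v else 0.
Proof.
elim: M => [|M IH]; first by rewrite big_geq //; case: ifP => //= ?; lia.
rewrite big_nat_recr //= IH.
by do 3 case: ifP => /= ?; rewrite ?addr0 ?add0r //; try lia.
Qed.

Lemma sum_indicator_window (M N : nat) (w : int) (v : V) :
  \sum_(0 <= m < N.+1) (if m%:Z == w then v else 0)
    + \sum_(1 <= m < M.+1) (if - m%:Z == w then v else 0) - v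
  = if - M%:Z <= w <= N%:Z then 0 else - v.
Proof.
rewrite sum_indicator_nonneg sum_indicator_neg.
by do 3 case: ifP => /= ?; rewrite ?addr0 ?add0r ?subrr ?sub0r //; try lia.
Qed.

End WindowCount.

Section FourierCoefficients.
Variable R : realType.
Variable G : topologicalZmodType.
Variable x1 : G.
Variable d : Op R -> Op R.
Hypothesis hd : derivation x1 d.

Lemma derivation_l2_linear a : in_calB x1 a -> l2_linear (d a).
Proof. by case: hd => _ hB _ _ _ ha; have [[h1 h2 _] _] := hB a ha; split. Qed.

Lemma derivation_trig_op (I : Type) (r : seq I) n (c : I -> Op R) (t : R) :
  (forall i, in_calB x1 (c i)) ->
  op_eq (d (trig_op r n c t)) (trig_op r n (fun i => d (c i)) t).
Proof.
case: hd => hresp _ hadd hscale _ hc; elim: r => [|i r IH] x hx.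
  have hV : in_calB x1 (@shiftV R) by apply: ga_base; left.
  have e0 : op_eq (opscale 0 (@shiftV R)) (trig_op [::] n c t).
    by move=> y _; rewrite trig_op_nil; apply/funext => k; rewrite /opscale mul0r.
  rewrite -(hresp _ _ (ga_scale _ hV) e0 x hx) (hscale _ _ hV x hx) trig_op_nil.
  by apply/funext => k; rewrite /opscale mul0r.
have hr : in_calB x1 (trig_op r n c t) by exact: calB_trig_op.
rewrite !trig_op_cons (hadd _ _ (ga_scale _ (hc i)) hr x hx) /opadd.
by rewrite (hscale _ _ (hc i) x hx) IH.
Qed.

Definition basis_vec (j : int) : Vec R := fun l => (l == j)%:R.

Lemma inl2_basis_vec j : inl2 (basis_vec j).
Proof. by apply: (@inl2_finsupp _ _ [:: j]) => k; rewrite inE /basis_vec => /negbTE ->. Qed.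

Lemma basis_decomp (x : Vec R) (js : seq int) : uniq js ->
  (forall k, k \notin js -> x k = 0) -> x = fun l => \sum_(j <- js) x j * basis_vec j l.
Proof.
move=> ujs hx; apply/funext => l.
have -> : \sum_(j <- js) x j * basis_vec j l = if l \in js then x l else 0.
  elim: js ujs {hx} => [|j js IH]; first by rewrite big_nil.
  rewrite /= big_cons inE => /andP [jn /IH ->]; rewrite /basis_vec.
  by case: eqP => [->|_] /=; rewrite ?mulr1 ?(negbTE jn) ?addr0 // mulr0 add0r.
by case: ifP => // /negbT /hx.
Qed.

Section Coordinates.
Variables (b : Op R) (I : Type) (r : seq I) (n : I -> int) (c : I -> Op R).
Hypothesis hc : forall i, in_calB x1 (c i).
Hypothesis hrho : forall t, op_eq (rho t b) (trig_op r n c t).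
Variables (x : Vec R) (js : seq int).
Hypothesis ujs : uniq js.
Hypothesis hx : forall k, k \notin js -> x k = 0.

Local Notation pairs := [seq (i, j) | i <- r, j <- js].
Local Notation coef p k := (x p.2 * d (c p.1) (basis_vec p.2) k).

Lemma rho_inv_derivation_coord t k : rho_inv t (d (rho t b)) x k =
  \sum_(p <- pairs) expi ((n p.1 + p.2 - k)%:~R * t) * coef p k.
Proof.
have hUx : inl2 (Uth t x) := (l2_linear_Uth t).1 x (inl2_finsupp hx).
have hUdec : Uth t x = fun l => \sum_(j <- js) (expi (j%:~R * t) * x j) * basis_vec j l.
  rewrite {1}(basis_decomp ujs hx); apply/funext => l; rewrite /Uth /diagop mulr_sumr.
  by apply: eq_bigr => j _; rewrite /basis_vec; case: eqP => [->|]; rewrite ?mulr1 ?mulr0.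
have hdrho : op_eq (d (rho t b)) (trig_op r n (fun i => d (c i)) t).
  have hct : in_calB x1 (trig_op r n c t) by exact: calB_trig_op.
  case: hd => hresp _ _ _ _ y hy; rewrite -derivation_trig_op //; symmetry.
  by apply: (hresp _ _ hct) => // z hz; rewrite hrho.
rewrite /rho_inv /opmul {1}/Uth /diagop hdrho // /trig_op big_allpairs mulr_sumr.
apply: eq_bigr => i _; rewrite hUdec (l2_linear_sum _ _ (derivation_l2_linear (hc i))).
  rewrite !mulr_sumr; apply: eq_bigr => j _ /=.
  by rewrite intrB intrD !mulrDl mulNr mulrN !expiD; ring.
exact: inl2_basis_vec.
Qed.

Lemma derivation_coord k : d b x k = \sum_(p <- pairs) coef p k.
Proof.
have := rho_inv_derivation_coord 0 k; rewrite rho0 rho_inv0 => ->.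
by apply: eq_bigr => p _; rewrite mulr0 expi0 mul1r.
Qed.

Lemma fourier_coord (m : int) k :
  fourier d m b x k = \sum_(p <- pairs) if m == k - (n p.1 + p.2) then coef p k else 0.
Proof.
rewrite /fourier; have -> : (fun t => expi (m%:~R * t) * rho_inv t (d (rho t b)) x k) =
    fun t => \sum_(p <- pairs) coef p k * expi ((m + (n p.1 + p.2 - k))%:~R * t).
  apply/funext => t; rewrite rho_inv_derivation_coord mulr_sumr.
  by apply: eq_bigr => p _; rewrite (intrD _ m) mulrDl expiD; ring.
rewrite cint_sum => [|p]; last by apply: continuousCZ; exact: continuousC_expi.
rewrite mulr_sumr; apply: eq_bigr => p _; rewrite scaled_cint_expi.
by congr (if _ then _ else _); apply/eqP/eqP; lia.
Qed.

Lemma fourier_partial_sums_sub (M N : nat) k :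
  \sum_(0 <= m < N.+1) fourier d m%:Z b x k + \sum_(1 <= m < M.+1) fourier d (- m%:Z) b x k
    - d b x k =
  \sum_(p <- pairs) if - M%:Z <= k - (n p.1 + p.2) <= N%:Z then 0 else - coef p k.
Proof.
under eq_bigr do rewrite fourier_coord; under [X in _ + X - _]eq_bigr do rewrite fourier_coord.
rewrite derivation_coord exchange_big [X in _ + X - _]exchange_big -big_split -sumrB /=.
by apply: eq_bigr => p _; rewrite sum_indicator_window.
Qed.

End Coordinates.
End FourierCoefficients.

Theorem proposition3p16 (R : realType) (G : topologicalZmodType) (x1 : G)
  (d : Op R -> Op R) :
  compact [set: G] -> hausdorff_space G -> infinite_set [set: G] ->
  closure (range (fun n : int => x1 *~ n)) = [set: G] ->
  derivation x1 d ->
  forall b : Op R, in_calB x1 b ->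
  forall x : Vec R, (exists N : nat, forall k : int, (N%:Z < `|k|)%R -> x k = 0) ->
  forall eps : R, 0 < eps -> exists K : nat, forall M N : nat, (K <= M)%N -> (K <= N)%N ->
    (sqn (fun k => (\sum_(0 <= n < N.+1) fourier d n%:Z b x k
                 + \sum_(1 <= n < M.+1) fourier d (- n%:Z) b x k
                 - d b x k)%R) <= eps%:E)%E.
Proof.
move=> _ _ _ _ hd b hb x [N0 hN0] eps eps0.
have [I [r [n [c [hc hrho]]]]] := calB_rho_trigonometric hb.
have [js [ujs hjs]] := finsupp_seq hN0.
pose C (p : I * int) k := - (x p.2 * d (c p.1) (basis_vec R p.2) k).
have inl2C p : inl2 (C p).
  apply/inl2N/inl2Z; apply: (derivation_l2_linear hd (hc p.1)).1; exact: inl2_basis_vec.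
have [K hK] := sqn_off_window_sum_small
  [seq (i, j) | i <- r, j <- js] (fun p => n p.1 + p.2) inl2C eps0.
exists K => M N hM hN; apply: le_trans (hK M N hM hN); apply: le_sqn => k.
by rewrite (fourier_partial_sums_sub hd hc hrho ujs hjs).
Qed.
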